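(* For all $M,M'\in\mathcal M$ and $h\in[H]$, $\frac1K\mathcal E_B(M,M',h)\le\mathcal W_F(M,M',h)$.
   Context: Factored MDP setting: $\mathcal O$ finite, $\mathcal X=[H]\times\mathcal O^d$ layered by time, $|\mathcal A|=K$; known parent sets $\mathrm{pa}_i\subseteq[d]$; transitions $P(x'|x,a)=\prod_{i=1}^dP^{(i)}[x'[i]\mid x[\mathrm{pa}_i],a,h]$; known reward $R^\star$ shared by all models, rewards in $[0,1]$ with total reward $\le1$; $\mathcal M$ is the set of all models with reward $R^\star$ and transitions factorizing with these parents, the true model $M^\star\in\mathcal M$. For a model $M$: $V_M,\pi_M$ its optimal value function and greedy optimal policy; $x_h\sim\pi$ the step-$h$ context when running $\pi$ in the true MDP; $(r,x')\sim M_h$ means $r\sim R^\star(x_h,a_h)$, $x'\sim P(x_h,a_h)$. $\mathcal E_B(M,M',h)=\mathbb E_{x_h\sim\pi_M,a_h\sim\pi_{M'}}[\mathbb E_{(r,x')\sim M'_h}[r+V_{M'}(x')]-\mathbb E_{(r,x')\sim M^\star_h}[r+V_{M'}(x')]]$. Test class $\mathcal F=\{g_1+\dots+g_d:g_i\in\mathcal G_i\}$, $\mathcal G_i$ all $\{-1,1\}$-valued functions of $(x,a,r,x')$ depending only on $(x[\mathrm{pa}_i],a,h,x'[i])$. $\mathcal W_F(M,M',h)=\max_{f\in\mathcal F}\mathbb E_{x_h\sim\pi_M,a_h\sim U(\mathcal A)}[\mathbb E_{M'_h}f(x_h,a_h,r,x')-\mathbb E_{M^\star_h}f(x_h,a_h,r,x')]$.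 *)

From HB Require Import structures.
From mathcomp Require Import all_boot all_order all_algebra.
Set Implicit Arguments. Unset Strict Implicit. Unset Printing Implicit Defensive.
Import Order.TTheory GRing.Theory Num.Theory.
Local Open Scope ring_scope.

Section FactoredMDP.
Variables (R : realFieldType) (O A : finType) (d H : nat).
Variable pa : 'I_d -> {set 'I_d}.

(* observation part x[1..d] of a context; the layer h is carried separately *)
Definition state := {ffun 'I_d -> O}.

(* a model = its transition factors P^(i)[o | x, a, h] (reward R* is shared) *)
Definition model := 'I_d -> nat -> state -> A -> O -> R.
Definition policy := nat -> state -> A.

Definition inModelClass (M : model) : Prop :=
  forall (i : 'I_d) (h : nat) (x : state) (a : A),
    (forall o, 0 <= M i h x a o) /\ (\sum_(o : O) M i h x a o = 1) /\
    (forall y : state, (forall j, j \in pa i -> x j = y j) ->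
       forall o, M i h x a o = M i h y a o).

Definition Ptrans (M : model) (h : nat) (x : state) (a : A) (x' : state) : R :=
  \prod_(i < d) M i h x a (x' i).

Variable Rstar : nat -> state -> A -> R.

(* optimal value function by backward induction; V at layer >= H is 0 *)
Fixpoint Vaux (M : model) (k h : nat) (x : state) : R :=
  match k with
  | 0 => 0
  | k'.+1 => \big[Num.max/0]_(a : A)
      (Rstar h x a + \sum_(x' : state) Ptrans M h x a x' * Vaux M k' h.+1 x')
  end.

Definition Vopt (M : model) (h : nat) (x : state) : R := Vaux M (H - h) h x.

Definition Qopt (M : model) (h : nat) (x : state) (a : A) : R :=
  Rstar h x a + \sum_(x' : state) Ptrans M h x a x' * Vopt M h.+1 x'.

Definition greedy (M : model) (pi : policy) : Prop :=
  forall h x, (h < H)%N -> Qopt M h x (pi h x) = Vopt M h x.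

Variable d0 : state -> R.
Variable Mstar : model.

Fixpoint occ (pi : policy) (h : nat) : state -> R :=
  match h with
  | 0 => d0
  | h'.+1 => fun x' => \sum_(x : state) occ pi h' x * Ptrans Mstar h' x (pi h' x) x'
  end.

Definition bellmanErr (M M' : model) (piM piM' : policy) (h : nat) : R :=
  \sum_(x : state) occ piM h x *
    (let a := piM' h x in
     (Rstar h x a + \sum_(x' : state) Ptrans M' h x a x' * Vopt M' h.+1 x')
   - (Rstar h x a + \sum_(x' : state) Ptrans Mstar h x a x' * Vopt M' h.+1 x')).

(* test class: g_i encoded by its sign pattern, as a function of (h, x, a, x'[i]) *)
Definition testCode := {ffun 'I_d -> {ffun 'I_H * state * A * O -> bool}}.

Definition sgn (b : bool) : R := if b then 1 else -1.

Definition validCode (g : testCode) : bool :=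
  [forall i : 'I_d, forall hh : 'I_H, forall x : state, forall y : state,
     forall a : A, forall o : O,
     [forall j in pa i, x j == y j] ==> (g i (hh, x, a, o) == g i (hh, y, a, o))].

(* f = g_1 + ... + g_d evaluated at (x_h, a_h, r, x') (independent of r) *)
Definition testFun (g : testCode) (h : 'I_H) (x : state) (a : A) (x' : state) : R :=
  \sum_(i < d) sgn (g i (h, x, a, x' i)).

Definition witnessVal (M M' : model) (piM : policy) (h : 'I_H) (g : testCode) : R :=
  \sum_(x : state) occ piM h x *
    ((#|A|%:R)^-1 * \sum_(a : A)
       (\sum_(x' : state) Ptrans M' h x a x' * testFun g h x a x'
      - \sum_(x' : state) Ptrans Mstar h x a x' * testFun g h x a x')).

Definition constCode : testCode := [ffun _ => [ffun _ => true]].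

Definition witnessedErr (M M' : model) (piM : policy) (h : 'I_H) : R :=
  \big[Num.max/witnessVal M M' piM h constCode]_(g : testCode | validCode g)
     witnessVal M M' piM h g.

End FactoredMDP.

(** Since [V_M'] takes
    values in [0, 1], the gap at [(x, a)] is at most the total variation
    distance between the two product transitions, and by a hybrid
    (telescoping) argument this is at most the sum over the factors [i] of the
    L1 distances between [P'^(i)] and [P*^(i)].  Each of these distances is the
    value of the sign test [g_i = sgn (P'^(i) - P*^(i))], which depends only on
    [(x[pa_i], a, h, x'[i])] because both factors do, so [g_1 + ... + g_d] lies
    in the test class.  Averaging over all actions instead of only the greedy
    one of [M'] loses at most the factor [K]. *)

From mathcomp Require Import all_boot all_order all_algebra.
From mathcomp Require Import ring.
Import Order.TTheory GRing.Theory Num.Theory.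
Local Open Scope ring_scope.
Set Implicit Arguments. Unset Strict Implicit.

Lemma sum_ffun_prod_marginal (R : comPzSemiRingType) (O : finType) (d : nat)
    (F : 'I_d -> O -> R) (i : 'I_d) :
  (forall j, j != i -> \sum_o F j o = 1) ->
  \sum_(x : {ffun 'I_d -> O}) \prod_j F j (x j) = \sum_o F i o.
Proof.
move=> F1; rewrite -bigA_distr_bigA /=.
by rewrite (bigD1 i) //= [X in _ * X]big1 ?mulr1 // => j /F1.
Qed.

Section ProductDistance.
Variable R : realDomainType.

(* [\prod_j hybrid_term i j (p j) (q j)] bounds the [i]-th term of the
   telescoping expansion of [\prod p - \prod q]. *)
Definition hybrid_term n (i j : 'I_n) (p q : R) : R :=
  if (j < i)%N then q else if j == i then `|p - q| else p.

Lemma normr_prodB_le_hybrid n (p q : 'I_n -> R) :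
  (forall j, 0 <= p j) -> (forall j, 0 <= q j) ->
  `|\prod_j p j - \prod_j q j| <= \sum_i \prod_j hybrid_term i j (p j) (q j).
Proof.
elim: n p q => [|n IHn] p q p_ge0 q_ge0; first by rewrite !big_ord0 subrr normr0.
rewrite [\prod_(j < n.+1) p j]big_ord_recr [\prod_(j < n.+1) q j]big_ord_recr.
rewrite [leRHS]big_ord_recr /=.
set P := \prod_(j < n) p _; set Q := \prod_(j < n) q _.
have Q_ge0 : 0 <= Q by apply: prodr_ge0.
have hyb_lt i : \prod_(j < n.+1) hybrid_term (widen_ord (leqnSn n) i) j (p j) (q j)
    = (\prod_(j < n) hybrid_term i j (p (widen_ord (leqnSn n) j))
                                     (q (widen_ord (leqnSn n) j))) * p ord_max.
  rewrite big_ord_recr /= {2}/hybrid_term /= ltnNge (ltnW (ltn_ord i)) /=.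
  by rewrite -val_eqE /= gtn_eqF.
have hyb_max : \prod_(j < n.+1) hybrid_term ord_max j (p j) (q j)
    = Q * `|p ord_max - q ord_max|.
  rewrite big_ord_recr /= {2}/hybrid_term ltnn eqxx; congr (_ * _).
  by apply: eq_bigr => j _; rewrite /hybrid_term /= ltn_ord.
rewrite hyb_max (eq_bigr _ (fun i _ => hyb_lt i)) -mulr_suml.
have -> : P * p ord_max - Q * q ord_max
    = (P - Q) * p ord_max + Q * (p ord_max - q ord_max) by ring.
apply: (le_trans (ler_normD _ _)).
rewrite !normrM (ger0_norm Q_ge0) (ger0_norm (p_ge0 _)) lerD //.
by apply: ler_wpM2r => //; apply: IHn.
Qed.

Lemma sum_normr_prodB_le (O : finType) (d : nat) (p q : 'I_d -> O -> R) :
  (forall j o, 0 <= p j o) -> (forall j o, 0 <= q j o) ->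
  (forall j, \sum_o p j o = 1) -> (forall j, \sum_o q j o = 1) ->
  \sum_(x : {ffun 'I_d -> O}) `|\prod_j p j (x j) - \prod_j q j (x j)|
    <= \sum_i \sum_o `|p i o - q i o|.
Proof.
move=> p_ge0 q_ge0 p_sum1 q_sum1.
apply: le_trans (ler_sum _ (fun x _ => normr_prodB_le_hybrid _ _)) _ => //.
rewrite exchange_big /=; apply: ler_sum => i _.
rewrite (@sum_ffun_prod_marginal _ _ _ (fun j o => hybrid_term i j (p j o) (q j o)) i).
  by rewrite /hybrid_term ltnn eqxx.
by move=> j /negbTE ji; rewrite /hybrid_term ji; case: (j < i)%N.
Qed.

Lemma sumrB_mulr_le_l1 (T : finType) (P Q V : T -> R) :
  (forall t, 0 <= V t <= 1) ->
  \sum_t P t * V t - \sum_t Q t * V t <= \sum_t `|P t - Q t|.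
Proof.
move=> V01; rewrite -sumrB; apply: ler_sum => t _; rewrite -mulrBl.
have /andP[V_ge0 V_le1] := V01 t.
apply: le_trans (ler_norm _) _; rewrite normrM (ger0_norm V_ge0).
by rewrite -[leRHS]mulr1 ler_wpM2l.
Qed.

End ProductDistance.

Section FactoredMDP.
Variables (R : realFieldType) (O A : finType) (d H : nat).
Variable pa : 'I_d -> {set 'I_d}.
Variable Rstar : nat -> state O d -> A -> R.

Implicit Types (M : model R O A d) (x : state O d) (a : A).

Lemma Ptrans_ge0 M h x a x' : inModelClass pa M -> 0 <= Ptrans M h x a x'.
Proof. by move=> M_in; apply: prodr_ge0 => i _; case: (M_in i h x a). Qed.

Lemma Ptrans_sum1 M h x a : inModelClass pa M -> \sum_x' Ptrans M h x a x' = 1.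
Proof.
move=> M_in; rewrite /Ptrans -(bigA_distr_bigA (fun i o => M i h x a o)) /=.
by apply: big1 => i _; case: (M_in i h x a) => _ [].
Qed.

Lemma expect_testFun M (g : testCode O A d H) (h : 'I_H) x a :
  inModelClass pa M ->
  \sum_x' Ptrans M h x a x' * testFun R g h x a x'
    = \sum_i \sum_o M i h x a o * sgn R (g i (h, x, a, o)).
Proof.
move=> M_in; under eq_bigr do rewrite mulr_sumr.
rewrite exchange_big /=; apply: eq_bigr => i _.
pose F j o := M j h x a o * (if j == i then sgn R (g i (h, x, a, o)) else 1).
transitivity (\sum_o F i o); last by apply: eq_bigr => o _; rewrite /F eqxx.
rewrite -sum_ffun_prod_marginal => [|j /negbTE ji].
  apply: eq_bigr => x' _; rewrite /Ptrans (bigD1 i) //= [RHS](bigD1 i) //= /F eqxx.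
  rewrite mulrAC; congr (_ * _); apply: eq_bigr => j /negbTE ->.
  by rewrite mulr1.
by rewrite /F ji; under eq_bigr do rewrite mulr1; case: (M_in j h x a) => _ [].
Qed.

Lemma backup_gap_le_factor_l1 M1 M2 h x a (V : state O d -> R) :
  inModelClass pa M1 -> inModelClass pa M2 -> (forall x', 0 <= V x' <= 1) ->
  \sum_x' Ptrans M1 h x a x' * V x' - \sum_x' Ptrans M2 h x a x' * V x'
    <= \sum_i \sum_o `|M1 i h x a o - M2 i h x a o|.
Proof.
move=> M1_in M2_in V01; apply: le_trans (sumrB_mulr_le_l1 _ _ V01) _.
apply: sum_normr_prodB_le => i.
- by move=> o; case: (M1_in i h x a) => ->.
- by move=> o; case: (M2_in i h x a) => ->.
- by case: (M1_in i h x a) => _ [].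
- by case: (M2_in i h x a) => _ [].
Qed.

Definition signTest M1 M2 : testCode O A d H :=
  [ffun i => [ffun t : 'I_H * state O d * A * O =>
    let: (h, x, a, o) := t in M2 i h x a o <= M1 i h x a o]].

Lemma signTest_valid M1 M2 :
  inModelClass pa M1 -> inModelClass pa M2 -> validCode pa (signTest M1 M2).
Proof.
move=> M1_in M2_in; apply/forallP => i; apply/forallP => h.
apply/forallP => x; apply/forallP => y; apply/forallP => a; apply/forallP => o.
apply/implyP => /forallP xy_pa; rewrite !ffunE /=.
have {}xy_pa j : j \in pa i -> x j = y j by move=> j_pa; apply/eqP/(implyP (xy_pa j)).
case: (M1_in i h x a) => _ [_ M1_pa]; case: (M2_in i h x a) => _ [_ M2_pa].
by rewrite (M1_pa y xy_pa) (M2_pa y xy_pa).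
Qed.

Lemma expect_signTestB M1 M2 (h : 'I_H) x a :
  inModelClass pa M1 -> inModelClass pa M2 ->
  \sum_x' Ptrans M1 h x a x' * testFun R (signTest M1 M2) h x a x'
    - \sum_x' Ptrans M2 h x a x' * testFun R (signTest M1 M2) h x a x'
  = \sum_i \sum_o `|M1 i h x a o - M2 i h x a o|.
Proof.
move=> M1_in M2_in; rewrite !expect_testFun // -sumrB; apply: eq_bigr => i _.
rewrite -sumrB; apply: eq_bigr => o _; rewrite !ffunE /= -mulrBl /sgn.
by have [_|_] := lerP; rewrite ?mulr1 // mulrN1 opprB.
Qed.

Lemma occ_ge0 (d0 : state O d -> R) Mstar (pi : policy O A d) h x :
  (forall x, 0 <= d0 x) -> inModelClass pa Mstar -> 0 <= occ d0 Mstar pi h x.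
Proof.
move=> d0_ge0 Ms_in; elim: h x => [|h IHh] x //=.
by apply: sumr_ge0 => y _; rewrite mulr_ge0 ?Ptrans_ge0.
Qed.

Lemma Vaux_ge0 M k h x : 0 <= Vaux Rstar M k h x.
Proof. by case: k => [|k] //=; apply: bigmax_ge_id. Qed.

Hypothesis Rstar_ge0 : forall h x a, 0 <= Rstar h x a.

(* Following a best action and then a best successor state at every step
   produces one trajectory whose reward dominates the optimal value. *)
Lemma Vaux_le_path_reward M (a0 : A) : inModelClass pa M ->
  forall k h x, exists (xs : nat -> state O d) (as_ : nat -> A),
    Vaux Rstar M k h x <= \sum_(h <= j < h + k) Rstar j (xs j) (as_ j).
Proof.
move=> M_in; elim=> [|k IHk] h x.
  by exists (fun _ => x), (fun _ => a0); rewrite addn0 big_geq.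
pose Q a := Rstar h x a + \sum_x' Ptrans M h x a x' * Vaux Rstar M k h.+1 x'.
have [abest _ abest_max] := @arg_maxP _ _ A a0 xpredT Q erefl.
have [xbest _ xbest_max] :=
  @arg_maxP _ _ (state O d) x xpredT (Vaux Rstar M k h.+1) erefl.
have [xs [as_ path_le]] := IHk h.+1 xbest.
exists (fun j => if j == h then x else xs j).
exists (fun j => if j == h then abest else as_ j).
rewrite addnS big_ltn ?ltnS ?leq_addr // eqxx -addSn.
rewrite (eq_big_nat _ _ (F2 := fun j => Rstar j (xs j) (as_ j))); last first.
  by move=> j /andP[hj _]; rewrite gtn_eqF.
apply: bigmax_le => [|a _]; first by rewrite addr_ge0 ?sumr_ge0.
apply: le_trans (abest_max a isT) _; rewrite /Q lerD2l.
apply: le_trans path_le.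
apply: (@le_trans _ _ (\sum_x' Ptrans M h x abest x' * Vaux Rstar M k h.+1 xbest)).
  apply: ler_sum => x' _.
  by apply: ler_wpM2l; [exact: Ptrans_ge0 | exact: xbest_max].
by rewrite -mulr_suml Ptrans_sum1 ?mul1r.
Qed.

Lemma Vopt_le1 M h x : inModelClass pa M ->
  (forall (xs : nat -> state O d) (as_ : nat -> A),
      \sum_(hh < H) Rstar hh (xs hh) (as_ hh) <= 1) ->
  Vopt H Rstar M h x <= 1.
Proof.
move=> M_in total_le1; rewrite /Vopt.
have [hH|/ltnW Hh] := leqP h H; last by rewrite (eqP Hh).
case: (pickP A) => [a0 _|A0]; last first.
  by case: (H - h)%N => [|k] //=; rewrite big_pred0.
have [xs [as_ path_le]] := Vaux_le_path_reward a0 M_in (H - h) h x.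
apply: le_trans path_le _; rewrite subnKC //.
apply: le_trans (total_le1 xs as_).
rewrite -(big_mkord xpredT (fun j => Rstar j (xs j) (as_ j))).
rewrite [leRHS](big_cat_nat _ (n := h)) //=.
by rewrite lerDr sumr_ge0.
Qed.

End FactoredMDP.

Theorem mainTheorem11 (R : realFieldType) (O A : finType) (d H : nat)
  (pa : 'I_d -> {set 'I_d})
  (Rstar : nat -> state O d -> A -> R)
  (d0 : state O d -> R)
  (Mstar M M' : model R O A d)
  (piM piM' : policy O A d)
  (h : 'I_H) :
  (forall hh x a, 0 <= Rstar hh x a <= 1) ->
  (forall (xs : nat -> state O d) (as_ : nat -> A),
      \sum_(hh < H) Rstar hh (xs hh) (as_ hh) <= 1) ->
  (forall x, 0 <= d0 x) -> \sum_(x : state O d) d0 x = 1 ->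
  inModelClass pa Mstar -> inModelClass pa M -> inModelClass pa M' ->
  greedy H Rstar M piM -> greedy H Rstar M' piM' ->
  (#|A|%:R)^-1 * bellmanErr H Rstar d0 Mstar M M' piM piM' h
    <= witnessedErr pa d0 Mstar M M' piM h.
Proof.
move=> Rstar01 total_le1 d0_ge0 _ Ms_in _ M'_in _ _.
have Rstar_ge0 hh x a : 0 <= Rstar hh x a by case/andP: (Rstar01 hh x a).
have V01 x' : 0 <= Vopt H Rstar M' h.+1 x' <= 1.
  by rewrite Vaux_ge0 // (Vopt_le1 Rstar_ge0 _ _ M'_in total_le1).
rewrite /witnessedErr.
apply: le_trans _ (le_bigmax_cond _ _ (signTest_valid _ M'_in Ms_in)).
rewrite /bellmanErr /witnessVal mulr_sumr; apply: ler_sum => x _.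
rewrite mulrCA; apply: ler_wpM2l; first exact: occ_ge0.
apply: ler_wpM2l; first by rewrite invr_ge0 ler0n.
under [leRHS]eq_bigr do rewrite (expect_signTestB _ _ _ M'_in Ms_in).
rewrite opprD addrACA subrr add0r (bigD1 (piM' h x)) //= -[leLHS]addr0.
apply: lerD; first exact: (backup_gap_le_factor_l1 _ _ _ M'_in Ms_in V01).
by do 3!apply: sumr_ge0 => ? _.
Qed.
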